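(* Let $P$ be a special product rule with $P$-product $*$. Then for all series $f,g$, $\overline{f*g}=\overline f*\overline g$; consequently reversal is an endomorphism of the commutative $\mathbb Q$-algebra $(\mathbb Q\langle\langle\Sigma\rangle\rangle;\mathbb 0,c\cdot,+,* )$.
   Context: Let $\Sigma$ be a finite alphabet, $\Sigma^*$ the finite words with empty word $\varepsilon$. A series is $f:\Sigma^*\to\mathbb Q$, $f_w=f(w)$; series form a $\mathbb Q$-vector space under pointwise operations with zero $\mathbb 0$. For $a\in\Sigma$, $\delta_af$ is $w\mapsto f(aw)$. The reversal $\overline f$ is $w\mapsto f(\overline w)$ with $\overline w$ the mirror image of $w$. Terms over $X$: generated by $u,v::=x\mid 0\mid c\cdot u\mid u+v\mid u*v$. A product rule is a term $P$ over $\{x,\dot x,y,\dot y\}$; $P(s_1,\dots,s_4)$ is substitution. The $P$-product $*$ and semantics $[\![u]\!]_\varrho$ are the unique pair with $(f*g)_\varepsilon=f_\varepsilon g_\varepsilon$, $\delta_a(f*g)=[\![P]\!]_{[x\mapsto f,\dot x\mapsto\delta_af,y\mapsto g,\dot y\mapsto\delta_ag]}$, and $[\![\cdot]\!]_\varrho$ interpreting variables via $\varrho$, constructors by zero, scalar multiplication, addition, $*$. $u\approx v$ iff $u,v$ denote the same commutative polynomial. $P$ is special if $P(x+y,\dot x+\dot y,z,\dot z)\approx P(x,\dot x,z,\dot z)+P(y,\dot y,z,\dot z)$, $P(x,\dot x,y*z,P(y,\dot y,z,\dot z))\approx P(x*y,P(x,\dot x,y,\dot y),z,\dot z)$, $P(x,\dot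 x,y,\dot y)\approx P(y,\dot y,x,\dot x)$. *)

From HB Require Import structures.
From mathcomp Require Import all_boot all_algebra.
From mathcomp Require Import mpoly.
Set Implicit Arguments. Unset Strict Implicit. Unset Printing Implicit Defensive.
Import GRing.Theory.
Local Open Scope ring_scope.

Definition series (S : finType) := seq S -> rat.

Definition szero {S : finType} : series S := fun _ => 0.
Definition sscale {S : finType} (c : rat) (f : series S) : series S :=
  fun w => c * f w.
Definition sadd {S : finType} (f g : series S) : series S := fun w => f w + g w.
Definition sdelta {S : finType} (a : S) (f : series S) : series S :=
  fun w => f (a :: w).
Definition srev {S : finType} (f : series S) : series S := fun w => f (rev w).

Inductive term (V : Type) : Type :=
  | TVar of V
  | TZero
  | TScale of rat & term V
  | TAdd of term V & term V
  | TMul of term V & term V.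
Arguments TZero {V}.

Fixpoint subst (V W : Type) (s : V -> term W) (t : term V) : term W :=
  match t with
  | TVar x => s x
  | TZero => TZero
  | TScale c u => TScale c (subst s u)
  | TAdd u v => TAdd (subst s u) (subst s v)
  | TMul u v => TMul (subst s u) (subst s v)
  end.

(* A product rule is a term over {x, x', y, y'}, encoded as 'I_4 with
   x = 0, x' = 1, y = 2, y' = 3. *)
Definition prod_rule := term 'I_4.

Definition env4 (T : Type) (s0 s1 s2 s3 : T) (i : 'I_4) : T :=
  match val i with 0 => s0 | 1 => s1 | 2 => s2 | _ => s3 end.

Definition papp (W : Type) (P : prod_rule) (s0 s1 s2 s3 : term W) : term W :=
  subst (env4 s0 s1 s2 s3) P.

Fixpoint sem (S : finType) (mul : series S -> series S -> series S)
  (V : Type) (t : term V) (rho : V -> series S) : series S :=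
  match t with
  | TVar x => rho x
  | TZero => szero
  | TScale c u => sscale c (sem mul u rho)
  | TAdd u v => sadd (sem mul u rho) (sem mul v rho)
  | TMul u v => mul (sem mul u rho) (sem mul v rho)
  end.

(* mul is the P-product: it satisfies the defining equations
   (f*g)_eps = f_eps g_eps and
   delta_a (f*g) = [[P]]_[x |-> f, x' |-> delta_a f, y |-> g, y' |-> delta_a g]
   (these equations determine mul uniquely). *)
Definition is_P_product (S : finType) (P : prod_rule)
  (mul : series S -> series S -> series S) : Prop :=
  (forall f g, mul f g [::] = f [::] * g [::]) /\
  (forall f g (a : S),
      sdelta a (mul f g) = sem mul P (env4 f (sdelta a f) g (sdelta a g))).

Fixpoint tpoly (n : nat) (t : term 'I_n) : {mpoly rat[n]} :=
  match t with
  | TVar i => 'X_i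
  | TZero => 0
  | TScale c u => c *: tpoly u
  | TAdd u v => tpoly u + tpoly v
  | TMul u v => tpoly u * tpoly v
  end.

Definition teqv (n : nat) (u v : term 'I_n) : Prop := tpoly u = tpoly v.

Definition v6 (k : nat) : term 'I_6 := TVar (inord k).

Definition special (P : prod_rule) : Prop :=
  let x := v6 0 in let x' := v6 1 in let y := v6 2 in
  let y' := v6 3 in let z := v6 4 in let z' := v6 5 in
  [/\ teqv (papp P (TAdd x y) (TAdd x' y') z z')
           (TAdd (papp P x x' z z') (papp P y y' z z')),
      teqv (papp P x x' (TMul y z) (papp P y y' z z'))
           (papp P (TMul x y) (papp P x x' y y') z z')
    & teqv (papp P x x' y y') (papp P y y' x x')].

(* A special rule denotes, as a commutative polynomial, a bilinear form
   [a x y + b (x y' + x' y) + d x' y'] with [b * b = b + a * d]: by additivity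
   and symmetry, scaling [x, x'] (or [y, y']) by 2 doubles the polynomial, so
   every monomial has degree one in each pair; evaluating symmetry and
   associativity at 0/1 points then pins down the coefficients.  For such
   coefficients the product defined on words by
   [(f * g)(u w) = a (f * g)(w) + b (f * δ_u g)(w) + b (δ_u f * g)(w)
                   + d (δ_u f * δ_u g)(w)]
   is commutative, associative and bilinear, so term semantics only depends on
   the denoted polynomial (evaluate in the unitization), and this product is
   the P-product, which is unique by induction on word length.  Since left and
   right derivatives commute, the same recursion holds with words read from the
   right, which is compatibility with reversal. *)

From HB Require Import structures.
From mathcomp Require Import all_boot all_algebra.
From mathcomp Require Import mpoly.
From mathcomp Require Import ring zify.
From mathcomp Require Import boolp.
Set Implicit Arguments. Unset Strict Implicit. Unset Printing Implicit Defensive.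
Import GRing.Theory Num.Theory.
Local Open Scope ring_scope.

Section Unitization.
Variables (S : finType) (mul : series S -> series S -> series S).
Hypothesis mulC : forall f g w, mul f g w = mul g f w.
Hypothesis mulA : forall f g h w, mul (mul f g) h w = mul f (mul g h) w.
Hypothesis mulDl : forall f1 f2 g w, mul (sadd f1 f2) g w = mul f1 g w + mul f2 g w.
Hypothesis mulZl : forall c f g w, mul (sscale c f) g w = c * mul f g w.

Lemma mulDr f g1 g2 w : mul f (sadd g1 g2) w = mul f g1 w + mul f g2 w.
Proof. by rewrite mulC mulDl !(mulC f). Qed.

Lemma mulZr c f g w : mul f (sscale c g) w = c * mul f g w.
Proof. by rewrite mulC mulZl mulC. Qed.

Lemma mul0l g w : mul szero g w = 0.
Proof.
have -> : szero = sscale 0 (@szero S).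
  by apply: funext => v; rewrite /sscale mul0r.
by rewrite mulZl mul0r.
Qed.

(* Adjoining a unit, [(r, f) * (s, g) = (r s, r g + s f + f * g)], turns the
   possibly non-unital algebra of series into a commutative ring, in which
   polynomials can be evaluated. *)
Record unitization := Unitization { ucst : rat; useries : series S }.
HB.instance Definition _ := gen_eqMixin unitization.
HB.instance Definition _ := gen_choiceMixin unitization.

Lemma unitization_ext x y :
  ucst x = ucst y -> (forall w, useries x w = useries y w) -> x = y.
Proof.
case: x y => [r f] [s g] /= -> E.
by rewrite (funext E).
Qed.

Definition uzero := Unitization 0 szero.
Definition uone := Unitization 1 szero.
Definition uadd x y := Unitization (ucst x + ucst y) (sadd (useries x) (useries y)).
Definition uopp x := Unitization (- ucst x) (sscale (-1) (useries x)).
Definition umul x y := Unitization (ucst x * ucst y)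
  (sadd (sadd (sscale (ucst x) (useries y)) (sscale (ucst y) (useries x)))
        (mul (useries x) (useries y))).

Lemma uaddA : associative uadd.
Proof. by move=> x y z; apply: unitization_ext => [|w] /=; rewrite /sadd addrA. Qed.
Lemma uaddC : commutative uadd.
Proof. by move=> x y; apply: unitization_ext => [|w] /=; rewrite /sadd addrC. Qed.
Lemma add0u : left_id uzero uadd.
Proof. by move=> x; apply: unitization_ext => [|w] /=; rewrite /sadd add0r. Qed.
Lemma addNu : left_inverse uzero uopp uadd.
Proof.
by move=> x; apply: unitization_ext => [|w] /=; rewrite /sadd /sscale /szero; ring.
Qed.

HB.instance Definition _ :=
  GRing.isZmodule.Build unitization uaddA uaddC add0u addNu.

Lemma umulA : associative umul.
Proof.
move=> x y z; apply: unitization_ext => [|w] /=; first by rewrite mulrA.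
rewrite /sadd /sscale !mulDl !mulDr !mulZl !mulZr mulA; ring.
Qed.
Lemma umulC : commutative umul.
Proof.
move=> x y; apply: unitization_ext => [|w] /=; first by rewrite mulrC.
rewrite /sadd /sscale mulC; ring.
Qed.
Lemma mul1u : left_id uone umul.
Proof.
move=> x; apply: unitization_ext => [|w] /=; first by rewrite mul1r.
rewrite /sadd /sscale mul0l /szero; ring.
Qed.
Lemma umulDl : left_distributive umul uadd.
Proof.
move=> x y z; apply: unitization_ext => [|w] /=; first by rewrite mulrDl.
rewrite /sadd /sscale !mulDl; ring.
Qed.
Lemma uone_neq0 : uone != uzero.
Proof. by apply/eqP => /(f_equal ucst) /= /eqP; rewrite oner_eq0. Qed.

HB.instance Definition _ := GRing.Zmodule_isComNzRing.Build unitization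
  umulA umulC mul1u umulDl uone_neq0.

Definition uscalar (r : rat) : unitization := Unitization r szero.

Lemma uscalar_is_zmod_morphism : zmod_morphism uscalar.
Proof.
by move=> r s; apply: unitization_ext => [|w] //=; rewrite /sadd /sscale /szero; ring.
Qed.
HB.instance Definition _ := GRing.isZmodMorphism.Build rat unitization uscalar
  uscalar_is_zmod_morphism.

Lemma uscalar_is_monoid_morphism : multiplicative uscalar.
Proof.
split=> // r s; apply: unitization_ext => [|w] //=.
by rewrite /sadd /sscale /szero mul0l; ring.
Qed.
HB.instance Definition _ := GRing.isMultiplicative.Build rat unitization uscalar
  uscalar_is_monoid_morphism.

Lemma mmap_tpoly (n : nat) (t : term 'I_n) (rho : 'I_n -> series S) :
  mmap uscalar (fun i => Unitization 0 (rho i)) (tpoly t) =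
  Unitization 0 (sem mul t rho).
Proof.
elim: t => [i||c u IH|u IHu v IHv|u IHu v IHv] /=.
- by rewrite mmapX mmap1U.
- by rewrite mmap0.
- rewrite mmapZ IH; apply: unitization_ext => [|w] /=; first by rewrite mulr0.
  by rewrite /sadd /sscale mul0l /szero; ring.
- by rewrite mmapD IHu IHv; apply: unitization_ext => [|w] /=; rewrite ?addr0.
- rewrite rmorphM /= IHu IHv; apply: unitization_ext => [|w] /=; first by rewrite mulr0.
  by rewrite /sadd /sscale; ring.
Qed.

Lemma sem_tpoly (n : nat) (t1 t2 : term 'I_n) (rho : 'I_n -> series S) :
  tpoly t1 = tpoly t2 -> sem mul t1 rho = sem mul t2 rho.
Proof.
move=> E; have := mmap_tpoly t2 rho.
by rewrite -E mmap_tpoly => -[].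
Qed.

End Unitization.

Definition prod_local (S : finType) (mul : series S -> series S -> series S) :=
  forall f f' g g' w,
  (forall v, size v <= size w -> f v = f' v)%N ->
  (forall v, size v <= size w -> g v = g' v)%N ->
  mul f g w = mul f' g' w.

Section BilinearProduct.
Variables (S : finType) (a b d : rat).

Fixpoint bprod (f g : series S) (w : seq S) {struct w} : rat :=
  match w with
  | [::] => f [::] * g [::]
  | x :: w => a * bprod f g w + b * bprod f (sdelta x g) w
              + b * bprod (sdelta x f) g w + d * bprod (sdelta x f) (sdelta x g) w
  end.

Lemma bprodC f g w : bprod f g w = bprod g f w.
Proof.
elim: w f g => [|x w IH] f g /=; first by rewrite mulrC.
rewrite (IH f g) (IH f (sdelta x g)) (IH (sdelta x f) g).
by rewrite (IH (sdelta x f) (sdelta x g)); ring.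
Qed.

Lemma bprodDl f1 f2 g w : bprod (sadd f1 f2) g w = bprod f1 g w + bprod f2 g w.
Proof.
elim: w f1 f2 g => [|x w IH] f1 f2 g /=; first by rewrite /sadd mulrDl.
have -> y : sdelta y (sadd f1 f2) = sadd (sdelta y f1) (sdelta y f2) by [].
by rewrite !IH; ring.
Qed.

Lemma bprodZl c f g w : bprod (sscale c f) g w = c * bprod f g w.
Proof.
elim: w f g => [|x w IH] f g /=; first by rewrite /sscale mulrA.
have -> y : sdelta y (sscale c f) = sscale c (sdelta y f) by [].
by rewrite !IH; ring.
Qed.

Definition lin4 (c1 c2 c3 c4 : rat) (f1 f2 f3 f4 : series S) : series S :=
  fun w => c1 * f1 w + c2 * f2 w + c3 * f3 w + c4 * f4 w.

Lemma bprod_lin4l c1 c2 c3 c4 f1 f2 f3 f4 g w :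
  bprod (lin4 c1 c2 c3 c4 f1 f2 f3 f4) g w =
  c1 * bprod f1 g w + c2 * bprod f2 g w + c3 * bprod f3 g w + c4 * bprod f4 g w.
Proof.
elim: w f1 f2 f3 f4 g => [|x w IH] f1 f2 f3 f4 g /=; first by rewrite /lin4; ring.
have -> : sdelta x (lin4 c1 c2 c3 c4 f1 f2 f3 f4) =
  lin4 c1 c2 c3 c4 (sdelta x f1) (sdelta x f2) (sdelta x f3) (sdelta x f4) by [].
by rewrite !IH; ring.
Qed.

Lemma bprod_lin4r c1 c2 c3 c4 f1 f2 f3 f4 g w :
  bprod g (lin4 c1 c2 c3 c4 f1 f2 f3 f4) w =
  c1 * bprod g f1 w + c2 * bprod g f2 w + c3 * bprod g f3 w + c4 * bprod g f4 w.
Proof. by rewrite bprodC bprod_lin4l !(bprodC g). Qed.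

Lemma sdelta_bprod x f g : sdelta x (bprod f g) =
  lin4 a b b d (bprod f g) (bprod f (sdelta x g)) (bprod (sdelta x f) g)
    (bprod (sdelta x f) (sdelta x g)).
Proof. by []. Qed.

(* After expanding both sides, everything cancels except a multiple of
   [b * b - b - a * d]. *)
Lemma bprodA : b * b = b + a * d ->
  forall f g h w, bprod (bprod f g) h w = bprod f (bprod g h) w.
Proof.
move=> Hab f g h w; elim: w f g h => [|x w IH] f g h /=; first by rewrite mulrA.
rewrite !sdelta_bprod !bprod_lin4l !bprod_lin4r !IH.
set N1 := bprod f (bprod g (sdelta x h)) w.
set N2 := bprod (sdelta x f) (bprod g h) w.
apply/eqP; rewrite -subr_eq0; apply/eqP.
transitivity ((b * b - b - a * d) * (N2 - N1)); first by rewrite /N1 /N2; ring.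
by rewrite Hab; ring.
Qed.

Lemma bprod_local : prod_local bprod.
Proof.
move=> f f' g g' w.
elim: w f f' g g' => [|x w IH] f f' g g' Hf Hg /=; first by rewrite Hf ?Hg.
have Hd (h h' : series S) : (forall v, size v <= (size w).+1 -> h v = h' v)%N ->
    forall v, (size v <= size w)%N -> sdelta x h v = sdelta x h' v.
  by move=> Hh v Hv; rewrite /sdelta Hh.
have Hf' v : (size v <= size w)%N -> f v = f' v by move=> Hv; apply/Hf/leqW.
have Hg' v : (size v <= size w)%N -> g v = g' v by move=> Hv; apply/Hg/leqW.
by rewrite (IH f f' g g') ?(IH f f' (sdelta x g) (sdelta x g'))
  ?(IH (sdelta x f) (sdelta x f') g g')
  ?(IH (sdelta x f) (sdelta x f') (sdelta x g) (sdelta x g')) //; exact: Hd.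
Qed.

Definition sdeltaR (x : S) (f : series S) : series S := fun w => f (rcons w x).

(* The defining recursion also holds when words are consumed from the right,
   since left and right derivatives commute. *)
Lemma bprod_rcons w x f g : bprod f g (rcons w x) =
  a * bprod f g w + b * bprod f (sdeltaR x g) w + b * bprod (sdeltaR x f) g w
  + d * bprod (sdeltaR x f) (sdeltaR x g) w.
Proof.
elim: w f g => [|y w IH] f g /=; first by rewrite /sdeltaR /sdelta /=; ring.
have C h : sdelta y (sdeltaR x h) = sdeltaR x (sdelta y h) by [].
by rewrite !IH !C; ring.
Qed.

Lemma bprod_rev_word w f g : bprod f g (rev w) = bprod (srev f) (srev g) w.
Proof.
have E x h : srev (sdeltaR x h) = sdelta x (srev h).
  by apply: funext => v; rewrite /srev /sdeltaR /sdelta rev_cons.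
elim: w f g => [|x w IH] f g //.
by rewrite rev_cons bprod_rcons !IH [RHS]/= !E.
Qed.

Lemma bprod_rev f g : srev (bprod f g) = bprod (srev f) (srev g).
Proof. by apply: funext => w; exact: bprod_rev_word. Qed.

End BilinearProduct.

Section Uniqueness.
Variables (S : finType) (P : prod_rule).

Lemma sem_agree (mul1 mul2 : series S -> series S -> series S) n :
  prod_local mul2 ->
  (forall f g w, size w <= n -> mul1 f g w = mul2 f g w)%N ->
  forall (V : Type) (t : term V) rho w, (size w <= n)%N ->
  sem mul1 t rho w = sem mul2 t rho w.
Proof.
move=> loc2 E V; elim=> [i||c t IH|t1 IH1 t2 IH2|t1 IH1 t2 IH2] rho w Hw //=.
- by rewrite /sscale IH.
- by rewrite /sadd IH1 ?IH2.
- by rewrite E //; apply: loc2 => v Hv; [apply: IH1 | apply: IH2];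
    exact: leq_trans Hw.
Qed.

Lemma P_product_unique (mul1 mul2 : series S -> series S -> series S) :
  is_P_product P mul1 -> is_P_product P mul2 -> prod_local mul2 -> mul1 = mul2.
Proof.
move=> [eps1 delta1] [eps2 delta2] loc2.
suff E n : forall f g w, (size w <= n)%N -> mul1 f g w = mul2 f g w.
  by apply: funext => f; apply: funext => g; apply: funext => w; exact: (E (size w)).
elim: n => [|n IH] f g [|x w] //= Hw; rewrite ?eps1 ?eps2 //.
rewrite -[mul1 f g _]/(sdelta x (mul1 f g) w) -[mul2 f g _]/(sdelta x (mul2 f g) w).
by rewrite delta1 delta2 (sem_agree loc2 IH).
Qed.

End Uniqueness.

Lemma subst_ext (V W : Type) (s1 s2 : V -> term W) (t : term V) :
  (forall i, s1 i = s2 i) -> subst s1 t = subst s2 t.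
Proof. by move=> E; elim: t => //= [c u ->|u -> v ->|u -> v ->]. Qed.

Lemma subst_comp (V W X : Type) (s : W -> term X) (s' : V -> term W) (t : term V) :
  subst s (subst s' t) = subst (fun i => subst s (s' i)) t.
Proof. by elim: t => //= [c u ->|u -> v ->|u -> v ->]. Qed.

Lemma subst_papp (W X : Type) (s : W -> term X) (P : prod_rule)
  (s0 s1 s2 s3 : term W) :
  subst s (papp P s0 s1 s2 s3) =
  papp P (subst s s0) (subst s s1) (subst s s2) (subst s s3).
Proof.
rewrite /papp subst_comp; apply: subst_ext => i.
by rewrite /env4; case: (val i) => [|[|[|k]]].
Qed.

Lemma tpoly_subst (n k : nat) (s : 'I_n -> term 'I_k) (t : term 'I_n) :
  tpoly (subst s t) = tpoly t \mPo [tuple tpoly (s i) | i < n].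
Proof.
elim: t => [i||c u IH|u IHu v IHv|u IHu v IHv] /=.
- by rewrite comp_mpolyXU -tnth_nth tnth_mktuple.
- by rewrite comp_mpoly0.
- by rewrite comp_mpolyZ IH.
- by rewrite comp_mpolyD IHu IHv.
- by rewrite rmorphM /= IHu IHv.
Qed.

Lemma tpoly_subst_eq (n k : nat) (s : 'I_n -> term 'I_k) (u v : term 'I_n) :
  tpoly u = tpoly v -> tpoly (subst s u) = tpoly (subst s v).
Proof. by rewrite !tpoly_subst => ->. Qed.

Lemma mcoeff_sumX (n : nat) (s : seq 'X_{1..n}) (c : 'X_{1..n} -> rat) m :
  uniq s -> (\sum_(m' <- s) c m' *: 'X_[m'])@_m = if m \in s then c m else 0.
Proof.
move=> s_uniq; rewrite raddf_sum /=.
under eq_bigr => m' _ do rewrite mcoeffZ mcoeffX.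
case: ifP => [Hm|/negbT Hm].
- rewrite (bigD1_seq m) //= eqxx mulr1 big1 ?addr0 //.
  by move=> m' /negbTE ->; rewrite mulr0.
- rewrite big_seq big1 // => m' Hm'.
  by case: eqP => [E|]; [move: Hm'; rewrite E (negbTE Hm) | rewrite mulr0].
Qed.

Lemma mcoeff_comp_scale (n : nat) (c : 'I_n -> rat) (p : {mpoly rat[n]}) m :
  (p \mPo [tuple c i *: 'X_i | i < n])@_m = (\prod_(i < n) c i ^+ m i) * p@_m.
Proof.
have EX m' : 'X_[m'] \mPo [tuple c i *: 'X_i | i < n] =
    (\prod_(i < n) c i ^+ m' i) *: 'X_[m'].
  rewrite comp_mpolyX.
  under eq_bigr => i _ do rewrite tnth_mktuple exprZn.
  by rewrite scaler_prod -mmap1_id.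
rewrite comp_mpolyEX.
under eq_bigr => m' _ do rewrite EX scalerA.
rewrite mcoeff_sumX ?msupp_uniq //; case: ifP => [_|/negbT Hm]; first exact: mulrC.
by rewrite (memN_msupp_eq0 Hm) mulr0.
Qed.

Lemma mpoly_supp_sub (n : nat) (p : {mpoly rat[n]}) (s : seq 'X_{1..n}) :
  uniq s -> {subset msupp p <= s} -> p = \sum_(m <- s) p@_m *: 'X_[m].
Proof.
move=> s_uniq supp_s; apply/mpolyP => m; rewrite mcoeff_sumX //.
case: ifP => // /negbT Hm; apply: memN_msupp_eq0.
by apply: contra Hm; exact: supp_s.
Qed.

Lemma mcoeff_scale_double (n : nat) (c : 'I_n -> rat) (p : {mpoly rat[n]}) m :
  p \mPo [tuple c i *: 'X_i | i < n] = p + p -> p@_m != 0 ->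
  \prod_(i < n) c i ^+ m i = 2.
Proof.
move=> E Hm; apply: (mulIf Hm).
by rewrite -mcoeff_comp_scale E mcoeffD -mulr2n mulr_natl.
Qed.

Lemma expr2_eq2 k : (2 : rat) ^+ k = 2 -> k = 1%N.
Proof.
rewrite -natrX => /eqP; rewrite eqr_nat => /eqP.
case: k => [|[|k]] //; rewrite !expnS => E.
have : (4 <= 2 * (2 * 2 ^ k))%N by rewrite mulnA leq_pmulr ?expn_gt0.
by rewrite E.
Qed.

Local Notation i4 k := (@Ordinal 4 k isT).
Local Notation X4 k := (TVar (i4 k)).

Lemma ord4P (Pr : 'I_4 -> Prop) :
  Pr (i4 0) -> Pr (i4 1) -> Pr (i4 2) -> Pr (i4 3) -> forall i, Pr i.
Proof.
by move=> P0 P1 P2 P3 [[|[|[|[|k]]]] Hi] //; rewrite (eq_irrelevance Hi isT).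
Qed.

Lemma prod_ord4 (F : 'I_4 -> rat) :
  \prod_(i < 4) F i = F (i4 0) * F (i4 1) * F (i4 2) * F (i4 3).
Proof.
rewrite !big_ord_recl big_ord0 mulr1 !mulrA.
by congr (F _ * F _ * F _ * F _); apply: val_inj.
Qed.

Lemma tpoly_papp (k : nat) (P : prod_rule) (s0 s1 s2 s3 : term 'I_k) :
  tpoly (papp P s0 s1 s2 s3) =
  tpoly P \mPo [tuple tpoly (env4 s0 s1 s2 s3 i) | i < 4].
Proof. exact: tpoly_subst. Qed.

Lemma tpoly_papp_id (P : prod_rule) :
  tpoly (papp P (X4 0) (X4 1) (X4 2) (X4 3)) = tpoly P.
Proof.
rewrite tpoly_papp -[RHS]comp_mpoly_id; congr (_ \mPo _).
by apply: eq_mktuple; apply: ord4P.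
Qed.

Lemma meval_papp (k : nat) (P : prod_rule) (w : 'I_k -> rat)
  (s0 s1 s2 s3 : term 'I_k) :
  meval w (tpoly (papp P s0 s1 s2 s3)) =
  meval (env4 (meval w (tpoly s0)) (meval w (tpoly s1)) (meval w (tpoly s2))
              (meval w (tpoly s3))) (tpoly P).
Proof.
rewrite tpoly_papp comp_mpoly_meval; congr (meval _ _).
by apply: funext; apply: ord4P; rewrite tnth_mktuple.
Qed.

Definition bilin_rule (a b c d : rat) : prod_rule :=
  TAdd (TAdd (TAdd (TScale a (TMul (X4 0) (X4 2))) (TScale b (TMul (X4 0) (X4 3))))
             (TScale c (TMul (X4 1) (X4 2))))
       (TScale d (TMul (X4 1) (X4 3))).

Lemma meval_bilin_rule (w : 'I_4 -> rat) (a b c d : rat) :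
  meval w (tpoly (bilin_rule a b c d)) =
  a * w (i4 0) * w (i4 2) + b * w (i4 0) * w (i4 3)
  + c * w (i4 1) * w (i4 2) + d * w (i4 1) * w (i4 3).
Proof. by rewrite /= !mevalD !mevalZ !mevalM !mevalXU !mulrA. Qed.

Lemma is_P_product_bprod (S : finType) (P : prod_rule) (a b d : rat) :
  b * b = b + a * d -> tpoly P = tpoly (bilin_rule a b b d) ->
  is_P_product P (@bprod S a b d).
Proof.
move=> Hab HP; split=> // f g x.
rewrite (sem_tpoly (@bprodC S a b d) (bprodA Hab) (@bprodDl S a b d)
  (@bprodZl S a b d) _ HP).
by apply: funext.
Qed.

Definition e4 (i j : 'I_4) : 'X_{1..4} := (U_(i) + U_(j))%MM.

Lemma mnm_bideg (m : 'X_{1..4}) :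
  (m (i4 0) + m (i4 1) = 1)%N -> (m (i4 2) + m (i4 3) = 1)%N ->
  m \in [:: e4 (i4 0) (i4 2); e4 (i4 0) (i4 3); e4 (i4 1) (i4 2); e4 (i4 1) (i4 3)].
Proof.
move=> Hx Hy.
suff -> : m = e4 (if m (i4 0) == 1%N then i4 0 else i4 1)
                 (if m (i4 2) == 1%N then i4 2 else i4 3).
  by do 2!case: ifP => _; rewrite !inE eqxx ?orbT.
by do 2![case: ifP => /eqP]; move=> E2 E0; apply/mnmP; apply: ord4P;
  rewrite /e4 mnmDE !mnm1E /=; lia.
Qed.

Lemma uniq_e4 :
  uniq [:: e4 (i4 0) (i4 2); e4 (i4 0) (i4 3); e4 (i4 1) (i4 2); e4 (i4 1) (i4 3)].
Proof.
apply: (@map_uniq _ _ (fun m : 'X_{1..4} => (m (i4 0), m (i4 2)))).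
by rewrite /= /e4 !mnmDE !mnm1E.
Qed.

Definition point (n : nat) (l : seq rat) (i : 'I_n) : rat := nth 0 l i.

Lemma meval_point_v6 (l : seq rat) (k : nat) :
  (k < 6)%N -> meval (point l) (tpoly (v6 k)) = nth 0 l k.
Proof. by move=> Hk; rewrite /= mevalXU /point inordK. Qed.

(* Symmetry evaluated at [(x, x', y, y') = (1, 0, 0, 1)] and associativity at
   [(x, x', y, y', z, z') = (1, 0, 1, 0, 0, 1)]. *)
Lemma special_bilin_rule (P : prod_rule) (a b c d : rat) :
  special P -> tpoly P = tpoly (bilin_rule a b c d) -> b = c /\ b * b = b + a * d.
Proof.
move=> [_ Hassoc Hcomm] E; split.
- move/(f_equal (meval (point [:: 1; 0; 0; 1]))): Hcomm.
  rewrite !meval_papp E !meval_bilin_rule /= !meval_point_v6 //=.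
  by rewrite !(mulr0, mul0r, mulr1, addr0, add0r).
- move/(f_equal (meval (point [:: 1; 0; 1; 0; 0; 1]))): Hassoc.
  rewrite !meval_papp E !meval_bilin_rule /= !mevalM !meval_point_v6 //=.
  by rewrite /= !(mulr0, mul0r, mulr1, mul1r, addr0, add0r) [d * a]mulrC.
Qed.

Definition tau6 (k : nat) (l : seq (term 'I_k)) (j : 'I_6) : term 'I_k :=
  nth TZero l j.

Lemma tau6_inord (k : nat) (l : seq (term 'I_k)) i :
  (i < 6)%N -> tau6 l (inord i) = nth TZero l i.
Proof. by move=> Hi; rewrite /tau6 inordK. Qed.

Section SpecialRule.
Variable P : prod_rule.
Hypothesis HP : special P.

Lemma special_add (k : nat) (x x' y y' z z' : term 'I_k) :
  tpoly (papp P (TAdd x y) (TAdd x' y') z z') =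
  tpoly (papp P x x' z z') + tpoly (papp P y y' z z').
Proof.
case: HP => H _ _; have := tpoly_subst_eq (tau6 [:: x; x'; y; y'; z; z']) H.
by rewrite /= !subst_papp /= !tau6_inord.
Qed.

Lemma special_comm (k : nat) (x x' y y' : term 'I_k) :
  tpoly (papp P x x' y y') = tpoly (papp P y y' x x').
Proof.
case: HP => _ _ H; have := tpoly_subst_eq (tau6 [:: x; x'; y; y']) H.
by rewrite /= !subst_papp /= !tau6_inord.
Qed.

Lemma special_scale_x :
  tpoly P \mPo [tuple (if (i < 2)%N then 2 else 1) *: 'X_i | i < 4] =
  tpoly P + tpoly P.
Proof.
have := special_add (X4 0) (X4 1) (X4 0) (X4 1) (X4 2) (X4 3).
rewrite tpoly_papp_id => <-; rewrite tpoly_papp; congr (_ \mPo _).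
by apply: eq_mktuple; apply: ord4P; rewrite /= ?scale1r // scaler_nat mulr2n.
Qed.

Lemma special_scale_y :
  tpoly P \mPo [tuple (if (i < 2)%N then 1 else 2) *: 'X_i | i < 4] =
  tpoly P + tpoly P.
Proof.
rewrite -[in RHS](tpoly_papp_id P) special_comm -special_add -special_comm.
rewrite tpoly_papp; congr (_ \mPo _).
by apply: eq_mktuple; apply: ord4P; rewrite /= ?scale1r // scaler_nat mulr2n.
Qed.

Lemma special_mdeg m : (tpoly P)@_m != 0 ->
  (m (i4 0) + m (i4 1) = 1 /\ m (i4 2) + m (i4 3) = 1)%N.
Proof.
move=> Hm; split; apply: expr2_eq2.
- have := mcoeff_scale_double special_scale_x Hm.
  by rewrite prod_ord4 /= !expr1n !mulr1 exprD.
- have := mcoeff_scale_double special_scale_y Hm.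
  by rewrite prod_ord4 /= !expr1n !mul1r exprD.
Qed.

Lemma special_bilinear :
  tpoly P =
  tpoly (bilin_rule (tpoly P)@_(e4 (i4 0) (i4 2)) (tpoly P)@_(e4 (i4 0) (i4 3))
                    (tpoly P)@_(e4 (i4 1) (i4 2)) (tpoly P)@_(e4 (i4 1) (i4 3))).
Proof.
rewrite {1}(@mpoly_supp_sub _ (tpoly P) _ uniq_e4) => [|m]; last first.
  by rewrite mcoeff_msupp => /special_mdeg[]; exact: mnm_bideg.
by rewrite !big_cons big_nil addr0 /= /e4 !mpolyXD !addrA.
Qed.
End SpecialRule.

Lemma special_sym_bilinear (P : prod_rule) : special P ->
  exists a b d, b * b = b + a * d /\ tpoly P = tpoly (bilin_rule a b b d).
Proof.
move=> HP; have E := special_bilinear HP.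
have [Ebc Hab] := special_bilin_rule HP E; rewrite -Ebc in E.
by do 3!eexists; split; [exact: Hab | exact: E].
Qed.

Theorem mainTheorem17 (S : finType) (P : prod_rule)
  (mul : series S -> series S -> series S) :
  special P -> is_P_product P mul ->
  (forall f g : series S, srev (mul f g) = mul (srev f) (srev g)) /\
  (srev (@szero S) = szero /\
   (forall (c : rat) (f : series S), srev (sscale c f) = sscale c (srev f)) /\
   (forall f g : series S, srev (sadd f g) = sadd (srev f) (srev g)) /\
   (forall f g : series S, srev (mul f g) = mul (srev f) (srev g))).
Proof.
move=> HP Hmul.
have [a [b [d [Hab HPE]]]] := special_sym_bilinear HP.
have -> : mul = bprod a b d.
  exact: P_product_unique Hmul (is_P_product_bprod S Hab HPE) (bprod_local a b d).
by have := @bprod_rev S a b d; do !split.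
Qed.
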